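(* Assume $\eta_1\le\frac{1}{4k(T_1+1)}$ and $0<r\le\frac{\eta_1}{200}$. With probability at least $1-4e^{-m/36}$ over the sample $S$, the following holds for every realization of the initialization: for all $0\le t\le T_1$ and all $i\in\mathcal{W}_0^+\cap\mathcal{A}^+$, (1) $o_1\cdot w_i^{(t)}\ge \frac{t\eta_1}{9}$; (2) $o_j\cdot w_i^{(t)}\le r$ for all $j\ne1$; and (3) $p_i^{(t)}(x)=o_1$ for every $x\in S_1^+$.
   Context: Fix $n\ge1$, $d\ge3$ and orthonormal $o_1,\dots,o_d\in\mathbb{R}^d$. Inputs are $x=(x[1],\dots,x[n])\in\mathbb{R}^{nd}$ with $x[j]\in\mathbb{R}^d$. The distribution $\mathcal{D}$ on $\mathbb{R}^{nd}\times\{\pm1\}$: $y$ uniform on $\{\pm1\}$; given $y=1$, an index $j_+$ uniform on $\{1,\dots,n\}$ is drawn, $x[j_+]=o_1$, and for $j\ne j_+$ independently $x[j]=o_{i_j}$, $i_j$ uniform on $\{3,\dots,d\}$; given $y=-1$, the same with $o_2$ instead of $o_1$. Network $N_{(W,a)}(x)=\sum_{i=1}^k a_i\max_j\sigma(w_i\cdot x[j])$, $\sigma(z)=\max\{0,z\}$, with $w_i$ the rows of $W\in\mathbb{R}^{k\times d}$. Loss $\ell(z)=\log(1+e^{-z})$. $S$ consists of $m$ i.i.d. samples from $\mathcal{D}$; $S_1$ is its first $\lceil m/2\rceil$ samples, $m_1=|S_1|$, $S_1^+=\{x:(x,1)\in S_1\}$, $S_1^-=\{x:(x,-1)\in S_1\}$,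 and $\mathcal{L}_1(W,a)=\frac{1}{m_1}\sum_{(x,y)\in S_1}\ell(yN_{(W,a)}(x))$. Initialization: each $w_i^{(0)}$ has norm $r$ (drawn uniformly on the radius-$r$ sphere) and each $a_i^{(0)}\in\{\pm1\}$. First-layer iterates: $W^{(t)}=W^{(t-1)}-\eta_1\nabla_W\mathcal{L}_1(W^{(t-1)},a^{(0)})$ for $t=1,\dots,T_1$, with $w_i^{(t)}$ the rows of $W^{(t)}$. Define $p_i^{(t)}(x)=x[j^*]$ where $j^*\in\arg\max_j w_i^{(t)}\cdot x[j]$, if $w_i^{(t)}\cdot x[j^*]>0$, and $p_i^{(t)}(x)=0$ otherwise; the gradient uses the convention $\frac{\partial}{\partial w_i}\max_j\sigma(w_i\cdot x[j])=p_i(x)$ (so $\max_j\sigma(w_i^{(t)}\cdot x[j])=w_i^{(t)}\cdot p_i^{(t)}(x)$). Sets: $\mathcal{A}^+=\{i:a_i^{(0)}=1\}$ and $\mathcal{W}_0^+=\{i:\arg\max_{l\in\{1,3,4,\dots,d\}}w_i^{(0)}\cdot o_l=1,\ w_i^{(0)}\cdot o_1>0\}$. *)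

From Stdlib Require Import Reals.
From mathcomp Require Import all_boot.
Open Scope R_scope.

(* Vectors of R^d are represented by functions nat -> R; only the
   coordinates 0..d-1 are ever used (through dotp d). *)
Definition vec := (nat -> R)%type.

Fixpoint sumR (f : nat -> R) (n : nat) : R :=
  match n with O => 0 | S p => sumR f p + f p end.

Definition dotp (d : nat) (v w : vec) : R := sumR (fun q => v q * w q) d.
Definition normv (d : nat) (v : vec) : R := sqrt (dotp d v v).
Definition zerov : vec := fun _ => 0.

(* o_1,...,o_d are o 0, ..., o (d-1) (0-based). *)
Definition orthonormal (d : nat) (o : nat -> vec) : Prop :=
  forall a b, (a < d)%N -> (b < d)%N ->
    dotp d (o a) (o b) = (if a == b then 1 else 0).

(* an input x = (x[1],...,x[n]) is a list of n vectors *)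
Definition relu (z : R) : R := Rmax 0 z.

Definition maxrelu (d : nat) (w : vec) (x : seq vec) : R :=
  foldr (fun v acc => Rmax (relu (dotp d w v)) acc) 0 x.

Fixpoint argmax_aux (d : nat) (w best : vec) (l : seq vec) : vec :=
  match l with
  | [::] => best
  | v :: l' => if Rlt_dec (dotp d w best) (dotp d w v)
               then argmax_aux d w v l' else argmax_aux d w best l'
  end.

Definition pvec (d : nat) (w : vec) (x : seq vec) : vec :=
  match x with
  | [::] => zerov
  | v :: l => let b := argmax_aux d w v l in
              if Rlt_dec 0 (dotp d w b) then b else zerov
  end.

Definition netN (d k : nat) (W : nat -> vec) (a : nat -> R) (x : seq vec) : R :=
  sumR (fun i => a i * maxrelu d (W i) x) k.

Definition loss (z : R) : R := ln (1 + exp (- z)).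
Definition dloss (z : R) : R := - (exp (- z) / (1 + exp (- z))).

(* gradient of L_1 w.r.t. w_i, with the convention d/dw max_j sigma = p_i(x);
   S1 is a list of (x, y) pairs, m_1 = size S1 *)
Definition gradw (d k : nat) (S1 : seq (seq vec * R)) (W : nat -> vec)
  (a : nat -> R) (i : nat) : vec :=
  fun q => / INR (size S1) *
     foldr (fun s acc => dloss (s.2 * netN d k W a s.1) * s.2 * a i
                          * pvec d (W i) s.1 q + acc) 0 S1.

Fixpoint gd (d k : nat) (S1 : seq (seq vec * R)) (a : nat -> R) (eta : R)
  (W0 : nat -> vec) (t : nat) : nat -> vec :=
  match t with
  | O => W0
  | S t' => let W := gd d k S1 a eta W0 t' in
            fun i q => W i q - eta * gradw d k S1 W a i q
  end.

(* One draw from D: (b, j_+, c) uniform; y = 1 iff b; x[j_+] = o_1 or o_2;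
   x[j] = o_{3 + c j} (1-based) for j <> j_+ (c j_+ is unused). The uniform
   distribution on this finite type pushes forward exactly to D. *)
Definition outcome (n d : nat) : finType :=
  (bool * 'I_n * {ffun 'I_n -> 'I_(d - 2)})%type.

Definition decode (n d : nat) (o : nat -> vec) (u : outcome n d)
  : seq vec * R :=
  let: (b, jp, c) := u in
  ([seq (if j == jp then (if b then o 0%N else o 1%N) else o (2 + c j)%N)
     | j <- enum 'I_n], if b then 1 else -1).

(* m i.i.d. samples = uniform element of the product *)
Definition sample (n d m : nat) : finType := {ffun 'I_m -> outcome n d}.

Definition S1of (n d m : nat) (o : nat -> vec) (S : sample n d m)
  : seq (seq vec * R) :=
  [seq @decode n d o (S i) | i <- enum 'I_m & (nat_of_ord i < uphalf m)%N].

(* W_0^+ : argmax_{l in {1,3,...,d}} w.o_l is (uniquely) 1, and w.o_1 > 0 *)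
Definition inW0plus (d : nat) (o : nat -> vec) (W0 : nat -> vec) (i : nat) : Prop :=
  0 < dotp d (W0 i) (o 0%N) /\
  forall l, (2 <= l)%N -> (l < d)%N ->
    dotp d (W0 i) (o l) < dotp d (W0 i) (o 0%N).

(* As long as every coordinate o_j . w_i^(t) stays within
   r + t eta_1 <= 1/(4k) of zero, the network output on every training example
   is at most 1/4, hence l'(y N(x)) <= -3/7 on the positive examples.  For a
   neuron i of W_0^+ with a_i = 1, o_1 is then the maximising patch of every
   positive example, so if at least 2/7 of S_1 is positive, one gradient step
   raises o_1 . w_i by at least eta_1 (3/7)(2/7) >= eta_1 / 9, while it never
   raises o_j . w_i for j <> 1 (the only other active patches belong to negative
   examples, which push w_i away from them); by induction o_1 remains the
   strict maximiser.  The number of positive examples in S_1 is binomial with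
   ceil(m/2) trials; weighting positive labels by 7^7 and negative ones by 8^7
   (an exponential moment) shows that fewer than 2/7 of them are positive with
   probability at most ((7^7 + 8^7) / (2 7^2 8^5))^ceil(m/2) <= e^(-m/36). *)

From Stdlib Require Import Reals Lra.
From mathcomp Require Import all_boot zify.
Open Scope R_scope.

Lemma sumR_ext f g n : (forall q, f q = g q) -> sumR f n = sumR g n.
Proof. by move=> efg; elim: n => //= n ->; rewrite efg. Qed.

Lemma sumR_add f g n : sumR (fun q => f q + g q) n = sumR f n + sumR g n.
Proof. by elim: n => [|n IH] /=; [lra | rewrite IH; lra]. Qed.

Lemma sumR_scale c f n : sumR (fun q => c * f q) n = c * sumR f n.
Proof. by elim: n => [|n IH] /=; [lra | rewrite IH; lra]. Qed.

Lemma sumR_ge0 f n : (forall q, 0 <= f q) -> 0 <= sumR f n.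
Proof. by move=> f_ge0; elim: n => [|n IH] /=; [lra | have := f_ge0 n; lra]. Qed.

Lemma dotpC d u v : dotp d u v = dotp d v u.
Proof. by apply: sumR_ext => q; lra. Qed.

Lemma dotp0 d u : dotp d u zerov = 0.
Proof.
rewrite /dotp (sumR_ext _ (fun q => 0 * u q)) => [|q].
  by rewrite sumR_scale; lra.
by rewrite /zerov; lra.
Qed.

Lemma dotp_ge0 d u : 0 <= dotp d u u.
Proof. by apply: sumR_ge0 => q; apply: Rle_0_sqr. Qed.

Lemma dotpBZ d u v w e :
  dotp d u (fun q => v q - e * w q) = dotp d u v - e * dotp d u w.
Proof.
by rewrite /dotp; elim: d => [|d IH] /=; [ring | rewrite IH; ring].
Qed.

Lemma dotp_foldr {A : Type} d u (c : A -> R) (g : A -> vec) (L : seq A) :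
  sumR (fun q => u q * foldr (fun s acc => c s * g s q + acc) 0 L) d =
  foldr (fun s acc => c s * dotp d u (g s) + acc) 0 L.
Proof.
elim: L => [|s L IH] /=.
  by rewrite (sumR_ext _ (fun q => 0 * u q)) => [|q]; [rewrite sumR_scale |]; lra.
by rewrite -IH /dotp -sumR_scale -sumR_add; apply: sumR_ext => q; ring.
Qed.

Lemma dotp_sub_scale_self d u w c :
  dotp d (fun q => w q - c * u q) (fun q => w q - c * u q) =
  dotp d w w - 2 * c * dotp d u w + c * c * dotp d u u.
Proof. by rewrite /dotp; elim: d => [|d IH] /=; [ring | rewrite IH; ring]. Qed.

Lemma abs_dotp_unit_le d u w : dotp d u u = 1 -> Rabs (dotp d u w) <= normv d w.
Proof.
move=> u1; have := dotp_ge0 d (fun q => w q - dotp d u w * u q).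
rewrite dotp_sub_scale_self u1 => sq_ge0.
by rewrite -sqrt_Rsqr_abs /normv; apply: sqrt_le_1_alt; rewrite /Rsqr; lra.
Qed.

Lemma argmax_aux_spec d w best l :
  List.In (argmax_aux d w best l) (best :: l) /\
  forall v, List.In v (best :: l) -> dotp d w v <= dotp d w (argmax_aux d w best l).
Proof.
elim: l best => [|v l IH] best /=.
  by split; [left | move=> v [<-|[]]; lra].
case: Rlt_dec => [lt_bv|ge_bv] /=.
- have [in_v le_v] := IH v; split; first by case: in_v; auto.
  move=> u [<-|[<-|in_u]]; last exact: le_v (or_intror in_u).
  + by have := le_v v (or_introl erefl); lra.
  + exact: le_v (or_introl erefl).
- have [in_b le_b] := IH best; split; first by case: in_b; auto.
  move=> u [<-|[<-|in_u]]; last exact: le_b (or_intror in_u).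
  + exact: le_b (or_introl erefl).
  + by have := le_b best (or_introl erefl); lra.
Qed.

Lemma pvec_spec d w x :
  (pvec d w x = zerov /\ forall v, List.In v x -> dotp d w v <= 0) \/
  (List.In (pvec d w x) x /\
   forall v, List.In v x -> dotp d w v <= dotp d w (pvec d w x)).
Proof.
case: x => [|v l] /=; first by left.
have [in_max le_max] := argmax_aux_spec d w v l.
case: Rlt_dec => [pos_max|npos_max]; first by right.
by left; split => // u /le_max; lra.
Qed.

Lemma dloss_bounds z : -1 <= dloss z <= 0.
Proof.
rewrite /dloss; have e_pos := exp_pos (- z).
have : 0 <= exp (- z) / (1 + exp (- z)) <= 1.
  split; first by left; apply: Rdiv_lt_0_compat; lra.
  by apply: (Rmult_le_reg_r (1 + exp (- z))); [lra | field_simplify; lra].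
lra.
Qed.

Lemma dloss_le_quarter z : z <= 1/4 -> dloss z <= - (3/7).
Proof.
move=> z_small; rewrite /dloss.
have e_ge : 3/4 <= exp (- z) by have := exp_ineq1_le (- z); lra.
suff : 3/7 <= exp (- z) / (1 + exp (- z)) by lra.
by apply: (Rmult_le_reg_r (1 + exp (- z))); [lra | field_simplify; lra].
Qed.

Lemma maxrelu_ge0 d w x : 0 <= maxrelu d w x.
Proof. by case: x => [|v x] /=; [lra | apply: Rle_trans (Rmax_l _ _); apply: Rmax_l]. Qed.

Lemma maxrelu_le d w x B : 0 <= B ->
  (forall v, List.In v x -> dotp d w v <= B) -> maxrelu d w x <= B.
Proof.
move=> B_ge0; elim: x => [|v x IH] le_B /=; first lra.
apply: Rmax_lub; first by apply: Rmax_lub; [lra | exact: le_B (or_introl erefl)].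
exact: IH (fun u in_u => le_B u (or_intror in_u)).
Qed.

Lemma netN_le d k W a x B :
  (forall i, (i < k)%N -> a i = 1 \/ a i = -1) ->
  (forall i, (i < k)%N -> maxrelu d (W i) x <= B) ->
  netN d k W a x <= INR k * B.
Proof.
rewrite /netN; elim: k => [|k IH] a_sign le_B; first by rewrite /=; lra.
have := IH (fun i lt_ik => a_sign i (leqW lt_ik)) (fun i lt_ik => le_B i (leqW lt_ik)).
have := le_B k (ltnSn k); have := maxrelu_ge0 d (W k) x.
by rewrite S_INR /=; case: (a_sign k (ltnSn k)) => ->; lra.
Qed.

(** * The gradient on examples from the support of D *)

Lemma INR_leq m n : (m <= n)%N -> INR m <= INR n.
Proof. by move=> /leP; apply: le_INR. Qed.

Lemma INR_muln m n : INR (m * n) = INR m * INR n.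
Proof. by rewrite -multE mult_INR. Qed.

Lemma INR_addn m n : INR (m + n) = INR m + INR n.
Proof. by rewrite -plusE plus_INR. Qed.

Lemma INR_expn m e : INR (m ^ e) = INR m ^ e.
Proof. by elim: e => [|e IH]; rewrite ?expn0 // expnS INR_muln IH. Qed.

Lemma Rinv_mul_le M D c : 0 < M -> D <= c * M -> / M * D <= c.
Proof.
move=> M_gt0 D_le; apply: (Rmult_le_reg_l M) => //.
by rewrite -Rmult_assoc Rinv_r; lra.
Qed.

Lemma foldr_Rabs_le {A : Type} (F : A -> R) (L : seq A) :
  (forall s, List.In s L -> Rabs (F s) <= 1) ->
  Rabs (foldr (fun s acc => F s + acc) 0 L) <= INR (size L).
Proof.
elim: L => [|s L IH] F_le; first by rewrite /= Rabs_R0; lra.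
have := Rabs_triang (F s) (foldr (fun s acc => F s + acc) 0 L).
have := F_le s (or_introl erefl); have := IH (fun u in_u => F_le u (or_intror in_u)).
by rewrite (S_INR (size L)) /=; lra.
Qed.

Lemma foldr_ge0 {A : Type} (F : A -> R) (L : seq A) :
  (forall s, List.In s L -> 0 <= F s) -> 0 <= foldr (fun s acc => F s + acc) 0 L.
Proof.
elim: L => [|s L IH] F_ge0 /=; first lra.
have := F_ge0 s (or_introl erefl); have := IH (fun u in_u => F_ge0 u (or_intror in_u)).
lra.
Qed.

Lemma foldr_le_count {A : Type} (F : A -> R) (p : pred A) c (L : seq A) :
  (forall s, List.In s L -> F s <= if p s then - c else 0) ->
  foldr (fun s acc => F s + acc) 0 L <= - c * INR (count p L).
Proof.
elim: L => [|s L IH] F_le; first by rewrite /=; lra.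
have := F_le s (or_introl erefl); have := IH (fun u in_u => F_le u (or_intror in_u)).
by rewrite /=; case: (p s); rewrite ?add1n ?add0n ?S_INR; lra.
Qed.

(* Positive examples contain o_1 and otherwise o_3, ..., o_d; negative ones
   only need to avoid o_1. *)
Definition supp_example d (o : nat -> vec) (s : seq vec * R) : Prop :=
  (s.2 = 1 /\ List.In (o 0%N) s.1 /\
     forall v, List.In v s.1 -> v = o 0%N \/ exists2 j, (2 <= j < d)%N & v = o j) \/
  (s.2 = -1 /\ forall v, List.In v s.1 -> exists2 j, (1 <= j < d)%N & v = o j).

Definition is_positive (s : seq vec * R) : bool :=
  if Req_dec_T s.2 1 then true else false.

Lemma is_positiveP s : reflect (s.2 = 1) (is_positive s).
Proof. by rewrite /is_positive; case: Req_dec_T => ?; constructor. Qed.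

Section Examples.
Context {d : nat} {o : nat -> vec}.
Hypotheses (ho : orthonormal d o) (d_gt0 : (0 < d)%N).

Lemma dotp_basis_bounds a b : (a < d)%N -> (b < d)%N -> 0 <= dotp d (o a) (o b) <= 1.
Proof. by move=> lt_ad lt_bd; rewrite ho //; case: eqP => _; lra. Qed.

Lemma supp_example_basis {s} : supp_example d o s ->
  forall v, List.In v s.1 -> exists2 j, (j < d)%N & v = o j.
Proof.
case=> [[_ [_ in_pos]] | [_ in_neg]] v /[dup] in_v.
- by case/in_pos => [->|[j /andP[_ lt_jd] ->]]; [exists 0%N | exists j].
- by case/in_neg => j /andP[_ lt_jd] ->; exists j.
Qed.

Lemma dotp_basis_pvec_bounds {s j} w : supp_example d o s -> (j < d)%N ->
  0 <= dotp d (o j) (pvec d w s.1) <= 1.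
Proof.
move=> supp_s lt_jd; case: (pvec_spec d w s.1) => [[-> _] | [in_p _]].
  by rewrite dotp0; lra.
by have [j' lt_j'd ->] := supp_example_basis supp_s _ in_p; exact: dotp_basis_bounds.
Qed.

Lemma pvec_positive_example {s w} : supp_example d o s -> s.2 = 1 ->
  0 < dotp d (o 0%N) w ->
  (forall j, (2 <= j < d)%N -> dotp d (o j) w < dotp d (o 0%N) w) ->
  pvec d w s.1 = o 0%N.
Proof.
case=> [[_ [in_o0 in_pos]] | [-> _]] s_pos; last lra.
rewrite dotpC => o0_pos o0_max.
case: (pvec_spec d w s.1) => [[_ le0] | [in_p le_p]]; first by have := le0 _ in_o0; lra.
case: (in_pos _ in_p) => [// | [j lt_j eq_p]].
by have := le_p _ in_o0; have := o0_max j lt_j; rewrite eq_p dotpC; lra.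
Qed.

Lemma dotp_first_pvec_negative {s} w : supp_example d o s -> s.2 <> 1 ->
  dotp d (o 0%N) (pvec d w s.1) = 0.
Proof.
case=> [[-> _] // | [_ in_neg]] _.
case: (pvec_spec d w s.1) => [[-> _] | [in_p _]]; first exact: dotp0.
have [j /andP[j_ge1 lt_jd] ->] := in_neg _ in_p.
by rewrite ho //; case: eqP => // j0; rewrite -j0 in j_ge1.
Qed.

End Examples.

Lemma dotp_gradw d k S1 W a i u :
  dotp d u (gradw d k S1 W a i) =
  / INR (size S1) * foldr (fun s acc =>
    dloss (s.2 * netN d k W a s.1) * s.2 * a i * dotp d u (pvec d (W i) s.1) + acc) 0 S1.
Proof.
rewrite -(dotp_foldr d u (fun s => dloss (s.2 * netN d k W a s.1) * s.2 * a i)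
  (fun s => pvec d (W i) s.1)) -sumR_scale.
by apply: sumR_ext => q; rewrite /gradw; ring.
Qed.

Section Gradient.
Context {d k : nat} {o : nat -> vec} {S1 : seq (seq vec * R)}.
Context {W : nat -> vec} {a : nat -> R} {i : nat}.
Hypotheses (ho : orthonormal d o) (d_gt0 : (0 < d)%N).
Hypothesis supp_S1 : forall s, List.In s S1 -> supp_example d o s.
Hypothesis S1_gt0 : (0 < size S1)%N.

Let size_S1_gt0 : 0 < INR (size S1).
Proof. by apply: lt_0_INR; apply/ltP. Qed.

Lemma abs_dotp_gradw_le {j} : (j < d)%N -> a i = 1 \/ a i = -1 ->
  Rabs (dotp d (o j) (gradw d k S1 W a i)) <= 1.
Proof.
move=> lt_jd a_sign; rewrite dotp_gradw Rabs_mult Rabs_inv Rabs_pos_eq; last lra.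
apply: Rinv_mul_le; rewrite // Rmult_1_l; apply: foldr_Rabs_le => s in_s.
have [dl_lo dl_hi] := dloss_bounds (s.2 * netN d k W a s.1).
have [p_lo p_hi] := dotp_basis_pvec_bounds ho d_gt0 (W i) (supp_S1 _ in_s) lt_jd.
have label : s.2 = 1 \/ s.2 = -1 by case: (supp_S1 _ in_s) => [[]|[]]; auto.
set g := dloss _ in dl_lo dl_hi *; set p := dotp _ _ _ in p_lo p_hi *.
by apply: Rabs_le; case: label => ->; case: a_sign => ->; split; nra.
Qed.

Section Aligned.
Hypothesis a_i : a i = 1.
Hypothesis pvec_pos : forall s, List.In s S1 -> s.2 = 1 -> pvec d (W i) s.1 = o 0%N.

Lemma dotp_first_gradw_le :
  (2 * size S1 <= 7 * count is_positive S1)%N ->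
  (forall s, List.In s S1 -> netN d k W a s.1 <= 1/4) ->
  dotp d (o 0%N) (gradw d k S1 W a i) <= - (1/9).
Proof.
move=> many_pos net_small; rewrite dotp_gradw; apply: Rinv_mul_le => //.
have sum_le : foldr (fun s acc => dloss (s.2 * netN d k W a s.1) * s.2 * a i
    * dotp d (o 0%N) (pvec d (W i) s.1) + acc) 0 S1
    <= - (3/7) * INR (count is_positive S1).
  apply: foldr_le_count => s in_s; case: is_positiveP => [s_pos | s_neg].
  - rewrite s_pos a_i pvec_pos // ho // eqxx Rmult_1_l !Rmult_1_r.
    exact: dloss_le_quarter (net_small s in_s).
  - have := dotp_first_pvec_negative ho d_gt0 (W i) (supp_S1 _ in_s) s_neg.
    by move=> ->; rewrite Rmult_0_r; lra.
have := INR_leq _ _ many_pos; rewrite !INR_muln /=; lra.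
Qed.

Lemma dotp_basis_gradw_ge0 {j} : (1 <= j < d)%N ->
  0 <= dotp d (o j) (gradw d k S1 W a i).
Proof.
move=> /andP[j_ge1 lt_jd]; rewrite dotp_gradw.
apply: Rmult_le_pos; first by left; apply: Rinv_0_lt_compat.
apply: foldr_ge0 => s in_s; case: (supp_S1 _ in_s) => [[s_pos _] | [s_neg _]].
  by rewrite pvec_pos // ho //; case: eqP => [j0|_]; [rewrite j0 in j_ge1 | lra].
have := dloss_bounds (s.2 * netN d k W a s.1).
have := dotp_basis_pvec_bounds ho d_gt0 (W i) (supp_S1 _ in_s) lt_jd.
by rewrite s_neg a_i; nra.
Qed.

End Aligned.
End Gradient.

(** * Training dynamics *)

Section Dynamics.
Context {d k : nat} {o : nat -> vec} {S1 : seq (seq vec * R)}.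
Context {a : nat -> R} {eta : R} {W0 : nat -> vec}.
Hypotheses (ho : orthonormal d o) (d_gt0 : (0 < d)%N).
Hypothesis supp_S1 : forall s, List.In s S1 -> supp_example d o s.
Hypothesis S1_gt0 : (0 < size S1)%N.
Hypothesis a_sign : forall i, (i < k)%N -> a i = 1 \/ a i = -1.
Hypothesis eta_ge0 : 0 <= eta.
Context {r : R}.
Hypothesis W0_small :
  forall i j, (i < k)%N -> (j < d)%N -> Rabs (dotp d (o j) (W0 i)) <= r.

Local Notation W := (gd d k S1 a eta W0).

Lemma dotp_gd_succ u t i :
  dotp d u (W t.+1 i) = dotp d u (W t i) - eta * dotp d u (gradw d k S1 (W t) a i).
Proof. exact: dotpBZ. Qed.

Lemma abs_dotp_gd_le {i j} t : (i < k)%N -> (j < d)%N ->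
  Rabs (dotp d (o j) (W t i)) <= r + INR t * eta.
Proof.
move=> lt_ik lt_jd; elim: t => [|t IH].
  by rewrite Rmult_0_l Rplus_0_r; apply: W0_small.
have := abs_dotp_gradw_le (k := k) (W := W t) ho d_gt0 supp_S1 S1_gt0 lt_jd
  (a_sign _ lt_ik).
rewrite dotp_gd_succ S_INR /Rminus => abs_g.
apply: Rle_trans (Rabs_triang _ _) _.
by rewrite Rabs_Ropp Rabs_mult (Rabs_pos_eq eta) //; nra.
Qed.

Lemma netN_gd_le {s} t : 0 <= r -> List.In s S1 ->
  netN d k (W t) a s.1 <= INR k * (r + INR t * eta).
Proof.
move=> r_ge0 in_s; apply: netN_le => // i lt_ik.
apply: maxrelu_le => [|v in_v]; first by have := pos_INR t; nra.
have [j lt_jd ->] := supp_example_basis d_gt0 (supp_S1 _ in_s) _ in_v.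
have := abs_dotp_gd_le t lt_ik lt_jd; have := Rle_abs (dotp d (o j) (W t i)).
by rewrite dotpC; lra.
Qed.

Section AlignedNeuron.
Context {i : nat}.
Hypotheses (i_W0plus : inW0plus d o W0 i) (a_i : a i = 1).

Lemma pvec_gd_aligned {t} :
  dotp d (o 0%N) (W0 i) <= dotp d (o 0%N) (W t i) ->
  (forall j, (1 <= j < d)%N -> dotp d (o j) (W t i) <= dotp d (o j) (W0 i)) ->
  forall s, List.In s S1 -> s.2 = 1 -> pvec d (W t i) s.1 = o 0%N.
Proof.
case: i_W0plus; rewrite dotpC => o0_pos o0_max o0_grow oj_shrink s in_s s_pos.
apply: (pvec_positive_example (supp_S1 _ in_s) s_pos) => [|j /andP[j_ge2 lt_jd]].
  lra.
have := o0_max j j_ge2 lt_jd; rewrite [dotp d (W0 i) (o j)]dotpC.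
have lt_j : (1 <= j < d)%N by rewrite lt_jd andbT ltnW.
by have := oj_shrink j lt_j; lra.
Qed.

Lemma gd_aligned_progress {T1 t} : (t <= T1)%N -> 0 <= r ->
  INR k * (r + INR T1 * eta) <= 1/4 ->
  (2 * size S1 <= 7 * count is_positive S1)%N ->
  dotp d (o 0%N) (W0 i) + INR t * eta / 9 <= dotp d (o 0%N) (W t i) /\
  (forall j, (1 <= j < d)%N -> dotp d (o j) (W t i) <= dotp d (o j) (W0 i)).
Proof.
move=> + r_ge0 budget many_pos; elim: t => [|t IH] le_tT.
  by split=> [|j _] /=; lra.
have [o0_grow oj_shrink] := IH (ltnW le_tT).
have o0_ge : dotp d (o 0%N) (W0 i) <= dotp d (o 0%N) (W t i).
  by have := pos_INR t; nra.
have pvec_pos := pvec_gd_aligned o0_ge oj_shrink.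
have net_small s : List.In s S1 -> netN d k (W t) a s.1 <= 1/4.
  move=> in_s; apply: Rle_trans (netN_gd_le t r_ge0 in_s) _.
  apply: Rle_trans budget; apply: Rmult_le_compat_l; first exact: pos_INR.
  by have := INR_leq _ _ (ltnW le_tT); nra.
split=> [|j lt_j]; rewrite dotp_gd_succ.
- have := dotp_first_gradw_le ho d_gt0 supp_S1 S1_gt0 a_i pvec_pos many_pos net_small.
  by rewrite S_INR; nra.
- have := dotp_basis_gradw_ge0 (k := k) ho d_gt0 supp_S1 S1_gt0 a_i pvec_pos lt_j.
  by have := oj_shrink j lt_j; nra.
Qed.

End AlignedNeuron.
End Dynamics.

Lemma gd_aligned_neuron {d k T1 S1 a eta r W0 o} :
  orthonormal d o -> (0 < d)%N ->
  (forall s, List.In s S1 -> supp_example d o s) -> (0 < size S1)%N ->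
  (2 * size S1 <= 7 * count is_positive S1)%N ->
  eta <= / (4 * INR k * (INR T1 + 1)) -> 0 < r -> r <= eta / 200 ->
  (forall i, (i < k)%N -> normv d (W0 i) = r) ->
  (forall i, (i < k)%N -> a i = 1 \/ a i = -1) ->
  forall t i, (t <= T1)%N -> (i < k)%N -> inW0plus d o W0 i -> a i = 1 ->
  let W := gd d k S1 a eta W0 t in
  INR t * eta / 9 <= dotp d (o 0%N) (W i) /\
  (forall j, (1 <= j)%N -> (j < d)%N -> dotp d (o j) (W i) <= r) /\
  (forall x y, List.In (x, y) S1 -> y = 1 ->
     forall q, (q < d)%N -> pvec d (W i) x q = o 0%N q).
Proof.
move=> ho d_gt0 supp_S1 S1_gt0 many_pos eta_le r_gt0 r_le W0_norm a_sign.
move=> t i le_tT lt_ik i_W0plus a_i W; rewrite {}/W.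
have eta_ge0 : 0 <= eta by lra.
have W0_small i' j : (i' < k)%N -> (j < d)%N -> Rabs (dotp d (o j) (W0 i')) <= r.
  move=> lt_i'k lt_jd; rewrite -(W0_norm i' lt_i'k).
  by apply: abs_dotp_unit_le; rewrite ho // eqxx.
have budget : INR k * (r + INR T1 * eta) <= 1/4.
  case: (posnP k) => [-> | k_gt0]; first by rewrite /=; lra.
  have k_pos : 0 < INR k by apply: lt_0_INR; apply/ltP.
  have T1_ge0 := pos_INR T1.
  have X_gt0 : 0 < 4 * INR k * (INR T1 + 1) by nra.
  have := Rmult_le_compat_r _ _ _ (Rlt_le _ _ X_gt0) eta_le.
  by rewrite Rinv_l; [nra | lra].
have [o0_grow oj_shrink] := gd_aligned_progress ho d_gt0 supp_S1 S1_gt0 a_sign eta_ge0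
  W0_small i_W0plus a_i le_tT (Rlt_le _ _ r_gt0) budget many_pos.
split; [|split].
- by case: i_W0plus => o0_pos _; rewrite dotpC in o0_pos; lra.
- move=> j j_ge1 lt_jd; have := oj_shrink j; rewrite j_ge1 lt_jd => /(_ isT).
  by have := Rle_abs (dotp d (o j) (W0 i)); have := W0_small i j lt_ik lt_jd; lra.
- move=> x y in_xy y1 q _.
  have o0_ge : dotp d (o 0%N) (W0 i) <= dotp d (o 0%N) (gd d k S1 a eta W0 t i).
    by have := pos_INR t; nra.
  by rewrite (pvec_gd_aligned supp_S1 i_W0plus o0_ge oj_shrink _ in_xy y1).
Qed.

(** * Concentration of the number of positive examples *)

Section FairCoin.
Local Open Scope nat_scope.

Lemma card_count_enum (T : finType) (P : pred T) : #|P| = count P (enum T).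
Proof. by rewrite cardE -size_filter enumT. Qed.

Lemma few_heads_weight a b h t : a <= b -> 7 * h <= 2 * (h + t) ->
  (a ^ 2 * b ^ 5) ^ (h + t) <= (a ^ 7) ^ h * (b ^ 7) ^ t.
Proof.
move=> le_ab few_h; set e := 2 * (h + t) - 7 * h.
have -> : (a ^ 7) ^ h * (b ^ 7) ^ t = a ^ (7 * h) * b ^ (5 * (h + t)) * b ^ e.
  by rewrite -!expnM -mulnA -!expnD; congr (_ * b ^ _); lia.
rewrite expnMn -!expnM (_ : 2 * (h + t) = 7 * h + e); last by lia.
rewrite expnD mulnAC leq_mul2l; apply/orP; right.
by elim: e => // e IH; rewrite !expnS leq_mul.
Qed.

Context {T : finType} {b : pred T} {flip : T -> T}.
Hypotheses (flipK : involutive flip) (b_flip : forall u, b (flip u) = ~~ b u).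

Lemma sum_fair_coin x y : 2 * \sum_(u : T) (if b u then x else y) = (x + y) * #|T|.
Proof.
rewrite mul2n -addnn {2}(reindex_inj (inv_inj flipK)) -big_split /=.
rewrite (eq_bigr (fun _ => x + y)) => [|u _].
  by rewrite sum_nat_const mulnC.
by rewrite b_flip; case: (b u); rewrite // addnC.
Qed.

Context {m : nat} {P : pred 'I_m}.

Lemma prod_if_const (A N : nat) :
  \prod_(i < m) (if P i then A else N) = A ^ #|P| * N ^ #|[predC P]|.
Proof.
rewrite (bigID P) /= -!prod_nat_const.
by congr (_ * _); apply: eq_big => // i; case: (P i).
Qed.

Lemma prod_coin_weight (S : {ffun 'I_m -> T}) X Y :
  \prod_(i | P i) (if b (S i) then X else Y) =
  X ^ #|[pred i | P i && b (S i)]| * Y ^ #|[pred i | P i && ~~ b (S i)]|.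
Proof.
rewrite (bigID (fun i => b (S i))) /= -!prod_nat_const.
by congr (_ * _); apply: eq_big => // i; case: (b (S i)); rewrite ?andbF ?andbT.
Qed.

Lemma sum_prod_weight X Y :
  2 ^ #|P| * \sum_(S : {ffun 'I_m -> T}) \prod_(i | P i) (if b (S i) then X else Y) =
  (X + Y) ^ #|P| * #|T| ^ m.
Proof.
under eq_bigr => S _ do rewrite big_mkcond.
rewrite -(bigA_distr_bigA (fun i u => if P i then (if b u then X else Y) else 1)) /=.
rewrite (eq_bigr (fun i => if P i then \sum_(u : T) (if b u then X else Y) else #|T|)).
  by rewrite prod_if_const mulnA -expnMn sum_fair_coin expnMn -mulnA -expnD cardC card_ord.
by move=> i _; case: (P i); rewrite // sum_nat_const muln1.
Qed.

(* Chernoff bound: a sample with fewer than 2/7 heads weighs at least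
   (7^2 8^5)^#|P| when heads weigh 7^7 and tails 8^7, while the total weight
   is ((7^7 + 8^7)/2)^#|P| #|T|^m. *)
Lemma card_few_heads :
  #|[set S : {ffun 'I_m -> T} | 7 * #|[pred i | P i && b (S i)]| < 2 * #|P|]|
    * (2 * (7 ^ 2 * 8 ^ 5)) ^ #|P| <= (7 ^ 7 + 8 ^ 7) ^ #|P| * #|T| ^ m.
Proof.
rewrite -sum_prod_weight expnMn mulnCA leq_mul2l -sum_nat_const; apply/orP; right.
set bad := [set S | _].
rewrite [X in _ <= X](bigID (mem bad)) /=; apply: leq_trans (leq_addr _ _).
apply: leq_sum => S; rewrite inE prod_coin_weight => /ltnW few_heads.
have heads_tails : #|[pred i | P i && b (S i)]| + #|[pred i | P i && ~~ b (S i)]| = #|P|.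
  by rewrite -(cardID (fun i => b (S i)) P); congr (_ + _); apply: eq_card => i;
    rewrite !inE // andbC.
by rewrite -heads_tails in few_heads *; apply: few_heads_weight.
Qed.
End FairCoin.

Lemma exp_pow x c : exp x ^ c = exp (INR c * x).
Proof.
elim: c => [|c IH]; first by rewrite /= Rmult_0_l exp_0.
by rewrite S_INR /= IH -exp_plus; congr exp; ring.
Qed.

Lemma pow_le_exp_half x c m : 0 <= x <= exp (- (1/18)) -> (m <= 2 * c)%N ->
  x ^ c <= exp (- INR m / 36).
Proof.
move=> x_bounds le_m2c; apply: Rle_trans (pow_incr _ _ c x_bounds) _.
have := INR_leq _ _ le_m2c; rewrite INR_muln exp_pow /= => le_mc.
have [lt_e | -> ] : INR c * - (1/18) < - INR m / 36 \/ INR c * - (1/18) = - INR m / 36.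
  by lra.
- by left; apply: exp_increasing.
- exact: Rle_refl.
Qed.

Lemma chernoff_constant :
  INR (7 ^ 7 + 8 ^ 7) / INR (2 * (7 ^ 2 * 8 ^ 5)) <= exp (- (1/18)).
Proof.
have INR_ratio a b : INR (a ^ 7 + b ^ 7) / INR (2 * (a ^ 2 * b ^ 5)) =
    (INR a ^ 7 + INR b ^ 7) / (INR 2 * (INR a ^ 2 * INR b ^ 5)).
  by rewrite INR_addn (INR_muln 2) (INR_muln (a ^ 2)) !INR_expn.
rewrite INR_ratio !INR_IZR_INZ /=.
by have := exp_ineq1_le (- (1/18)); lra.
Qed.

Lemma tail_ratio {g bad N c m A K : nat} :
  (g + bad)%N = N -> (0 < N)%N -> (m <= 2 * c)%N -> (0 < K)%N ->
  INR A / INR K <= exp (- (1/18)) -> (bad * K ^ c <= A ^ c * N)%N ->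
  1 - exp (- INR m / 36) <= INR g / INR N.
Proof.
move=> card_split N_gt0 le_m2c K_gt0 ratio_AK tail.
have N_pos : 0 < INR N by apply: lt_0_INR; apply/ltP.
have K_pos : 0 < INR K by apply: lt_0_INR; apply/ltP.
have tail_pow : INR bad <= (INR A / INR K) ^ c * INR N.
  have Kc_pos : 0 < INR K ^ c by apply: pow_lt.
  apply: (Rmult_le_reg_r (INR K ^ c)) => //.
  have -> : (INR A / INR K) ^ c * INR N * INR K ^ c = INR A ^ c * INR N.
    by rewrite /Rdiv Rpow_mult_distr pow_inv; field; lra.
  by have := INR_leq _ _ tail; rewrite !INR_muln !INR_expn.
have ratio_ge0 : 0 <= INR A / INR K.
  by apply: Rmult_le_pos; [apply: pos_INR | left; apply: Rinv_0_lt_compat].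
have := pow_le_exp_half _ _ _ (conj ratio_ge0 ratio_AK) le_m2c.
move=> pow_le; have := f_equal INR card_split; rewrite INR_addn => split_R.
apply: (Rmult_le_reg_r (INR N)) => //.
by rewrite /Rdiv Rmult_assoc Rinv_l; [nra | lra].
Qed.

Definition flip_label {n d} (u : outcome n d) : outcome n d := (~~ u.1.1, u.1.2, u.2).

Lemma flip_labelK n d : involutive (@flip_label n d).
Proof. by case=> [[b j] c]; rewrite /flip_label /= negbK. Qed.

Definition good_samples n d m : {set sample n d m} :=
  [set S : sample n d m | (0 < m)%N &&
    (2 * uphalf m <= 7 * #|[pred i : 'I_m | (i < uphalf m)%N && (S i).1.1]|)%N].

Lemma card_first_half m : #|[pred i : 'I_m | (i < uphalf m)%N]| = uphalf m.
Proof.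
rewrite card_count_enum -(count_map val (fun j => j < uphalf m)%N) val_enum_ord.
rewrite -size_filter (filter_iota_ltn 0 (j := uphalf m)) ?size_iota //.
by rewrite leq_uphalf_double -addnn leq_addr.
Qed.

Lemma good_samples_ratio n d m : (0 < n)%N -> (2 < d)%N ->
  1 - exp (- INR m / 36) <= INR #|good_samples n d m| / INR #|[set: sample n d m]|.
Proof.
move=> n_gt0 d_gt2.
have N_gt0 : (0 < #|[set: sample n d m]|)%N.
  have d2_gt0 : (0 < d - 2)%N by rewrite subn_gt0.
  rewrite cardsT card_ffun card_ord expn_gt0; apply/orP; left; apply/card_gt0P.
  by exists (true, Ordinal n_gt0, [ffun _ => Ordinal d2_gt0]).
case: (posnP m) => [m0 | m_gt0].
  have N_pos : 0 < INR #|[set: sample n d m]| by apply: lt_0_INR; apply/ltP.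
  have := Rmult_le_pos _ _ (pos_INR #|good_samples n d m|)
    (Rlt_le _ _ (Rinv_0_lt_compat _ N_pos)).
  by rewrite m0 /= Ropp_0 /Rdiv Rmult_0_l exp_0; lra.
apply: (tail_ratio (bad := #|~: good_samples n d m|) (c := uphalf m) _ N_gt0 _ _
  chernoff_constant).
- by rewrite cardsC cardsT.
- by have := odd_double_half m; rewrite uphalf_half; case: (odd m) => /=; lia.
- by rewrite !muln_gt0.
rewrite cardsT card_ffun card_ord -(card_first_half m).
apply: leq_trans (card_few_heads (flip_labelK n d) (b := fun u => u.1.1) (fun u => erefl)).
rewrite leq_mul2r; apply/orP; right; apply: subset_leq_card; apply/subsetP => S.
by rewrite !inE m_gt0 /= card_first_half ltnNge.
Qed.

Lemma In_map {A : eqType} {B : Type} (f : A -> B) {s : seq A} {x} :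
  x \in s -> List.In (f x) (map f s).
Proof.
elim: s => [|y s IH] //=; rewrite in_cons => /orP[/eqP <-|x_in_s]; [left | right] => //.
exact: IH.
Qed.

Lemma In_map_inv {A B : Type} {f : A -> B} {s : seq A} {y} :
  List.In y (map f s) -> exists x, y = f x.
Proof. by elim: s => [|x s IH] //= [<-|/IH]; [exists x |]. Qed.

Lemma supp_decode n d o (u : outcome n d) : (1 < d)%N ->
  supp_example d o (decode n d o u).
Proof.
move=> d_gt1; have c_bound (c : 'I_(d - 2)) : (2 <= 2 + c < d)%N.
  by have := ltn_ord c; lia.
case: u => [[[] jp] c] /=; [left | right]; split => //.
- split; first by have := In_map (fun j => if j == jp then o 0%N else o (2 + c j)%N)
    (mem_enum _ jp); rewrite eqxx.
  move=> v /In_map_inv [j ->]; case: eqP => _; [by left | right].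
  by exists (2 + c j)%N; rewrite ?c_bound.
- move=> v /In_map_inv [j ->]; case: eqP => _; first by exists 1%N; rewrite ?d_gt1.
  by exists (2 + c j)%N => //; have := c_bound (c j); lia.
Qed.

Lemma is_positive_decode n d o (u : outcome n d) :
  is_positive (decode n d o u) = u.1.1.
Proof. by case: u => [[[] jp] c]; rewrite /is_positive /=; case: Req_dec_T => // ?; lra. Qed.

Lemma supp_S1of n d m o (S : sample n d m) : (1 < d)%N ->
  forall s, List.In s (S1of n d m o S) -> supp_example d o s.
Proof. by move=> d_gt1 s /In_map_inv [i ->]; apply: supp_decode. Qed.

Lemma size_S1of n d m o (S : sample n d m) : size (S1of n d m o S) = uphalf m.
Proof. by rewrite size_map size_filter -card_count_enum card_first_half. Qed.

Lemma count_positive_S1of n d m o (S : sample n d m) :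
  count is_positive (S1of n d m o S) =
  #|[pred i : 'I_m | (i < uphalf m)%N && (S i).1.1]|.
Proof.
rewrite count_map count_filter card_count_enum.
by apply: eq_count => i /=; rewrite is_positive_decode andbC.
Qed.

Theorem lemma5p3 (n d k m T1 : nat) (eta1 r : R) (o : nat -> vec)
  (hn : (1 <= n)%N) (hd : (3 <= d)%N) (hk : (1 <= k)%N)
  (ho : orthonormal d o)
  (heta : eta1 <= / (4 * INR k * (INR T1 + 1)))
  (hr0 : 0 < r) (hr : r <= eta1 / 200) :
  exists G : {set sample n d m},
    1 - 4 * exp (- INR m / 36) <= INR #|G| / INR #|[set: sample n d m]| /\
    forall S, S \in G ->
    forall (W0 : nat -> vec) (a0 : nat -> R),
      (forall i, (i < k)%N -> normv d (W0 i) = r) ->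
      (forall i, (i < k)%N -> a0 i = 1 \/ a0 i = -1) ->
      forall t i, (t <= T1)%N -> (i < k)%N ->
        inW0plus d o W0 i -> a0 i = 1 ->
        let W := gd d k (S1of n d m o S) a0 eta1 W0 t in
        INR t * eta1 / 9 <= dotp d (o 0%N) (W i) /\
        (forall j, (1 <= j)%N -> (j < d)%N -> dotp d (o j) (W i) <= r) /\
        (forall x y, List.In (x, y) (S1of n d m o S) -> y = 1 ->
           forall q, (q < d)%N -> pvec d (W i) x q = o 0%N q).
Proof.
exists (good_samples n d m); split.
  by have := good_samples_ratio _ _ m hn hd; have := exp_pos (- INR m / 36); lra.
move=> S; rewrite inE => /andP[m_gt0 many_pos] W0 a0 W0_norm a0_sign.
apply: gd_aligned_neuron heta hr0 hr W0_norm a0_sign => //.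
- exact: leq_trans hd.
- by apply: supp_S1of; apply: leq_trans hd.
- by rewrite size_S1of uphalf_gt0.
- by rewrite size_S1of count_positive_S1of.
Qed.
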